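(* Let $n\ge1$ and $\gamma\in[0,1]$. Define $\mathcal Q_n^\gamma=\{(\mathbf q_0,\mathbf q_1)\mid \mathbf q_i\in\{0,1\}^n,\ \mathcal W(\mathbf q_i)\le\gamma n\text{ for } i=0,1\}$, where $\mathcal W$ denotes Hamming weight. For $a\in\{0,1\}$ let $\lvert \hat a\rangle=\frac{1}{\sqrt2}(\lvert 0\rangle+(-1)^a\lvert 1\rangle)$; for bits $r_0,r_1,s$ let $\lvert\psi^{s}_{r_0r_1}\rangle_{A_0A_1}=\lvert r_0\rangle_{A_s}\otimes\lvert \hat r_1\rangle_{A_{\bar s}}$; and for $\mathbf r_0,\mathbf r_1,\mathbf s\in\{0,1\}^n$ let $\lvert\Psi^{\mathbf s}_{\mathbf r_0\mathbf r_1}\rangle_A=\bigotimes_{j=1}^n\lvert\psi^{s^j}_{r_0^jr_1^j}\rangle_{A_0^jA_1^j}$. Consider any strategy consisting of a finite-dimensional ancilla $E$ in a pure state $\lvert\chi\rangle_E$, a unitary $U$ on $AE=B_0B_1B'$ (finite-dimensional subsystems), a projective measurement $\{R^{b'}\}_{b'\in\{0,1\}}$ on $B'$, and for each $i\in\{0,1\}$, $\mathbf s\in\{0,1\}^n$, $b'\in\{0,1\}$ a projective measurement $\{\Pi^{\mathbf e}_{i\mathbf s b'}\}_{\mathbf e\in\{0,1\}^n}$ on $B_i$. Let $\lvert\Phi^{\mathbf s}_{\mathbf r_0\mathbf r_1}\rangle=U(\lvert\Psi^{\mathbf s}_{\mathbf r_0\mathbf r_1}\rangle\otimes\lvert\chi\rangle)$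 and $$p_n^\gamma=\frac{1}{2^{3n}}\sum_{(\mathbf q_0,\mathbf q_1)\in\mathcal Q_n^\gamma}\ \sum_{\mathbf r_0,\mathbf r_1,\mathbf s}\sum_{b'}\langle\Phi^{\mathbf s}_{\mathbf r_0\mathbf r_1}\rvert\,\Pi^{\mathbf r_{b'}\oplus\mathbf q_0}_{0\mathbf s b'}\otimes\Pi^{\mathbf r_{\bar b'}\oplus\mathbf q_1}_{1\mathbf s b'}\otimes R^{b'}\,\lvert\Phi^{\mathbf s}_{\mathbf r_0\mathbf r_1}\rangle.$$ Then $$p_n^\gamma\le\bigl\lvert\mathcal Q_n^\gamma\bigr\rvert\Bigl(\frac12+\frac{1}{2\sqrt2}\Bigr)^n.$$
   Context: $p_n^\gamma$ is the probability that both Bob's outputs (from $B_0$ and from $B_1$) are within Hamming distance $\gamma n$ of $\mathbf r_{b'}$ and $\mathbf r_{\bar b'}$ respectively, for uniformly random $\mathbf r_0,\mathbf r_1,\mathbf s$; $\bar b'=b'\oplus1$ and $\oplus$ is bitwise addition modulo 2. *)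

(* Quantum states/operators are represented by their
   coordinates in a fixed orthonormal (computational) basis indexed by a
   finType: a vector on a system with basis I is a function I -> C, an
   operator from system J to system I is a function I -> J -> C (matrix
   entries), and tensor products correspond to product index types with
   products of amplitudes / matrix entries. *)
From HB Require Import structures.
From mathcomp Require Import all_boot all_order all_algebra.
Set Implicit Arguments. Unset Strict Implicit. Unset Printing Implicit Defensive.
Import Order.TTheory GRing.Theory Num.Theory.
Local Open Scope ring_scope.

Section Quantum.
Variable C : numClosedFieldType.

Definition bits (n : nat) := {ffun 'I_n -> bool}.

Definition hw n (q : bits n) : nat := #|[set j | q j]|.

Definition bxor n (r q : bits n) : bits n := [ffun j => r j (+) q j].

Definition Qset n (gamma : C) : {set bits n * bits n} :=
  [set q : bits n * bits n |
     ((hw q.1)%:R <= gamma * n%:R) && ((hw q.2)%:R <= gamma * n%:R)].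

Definition ket (r : bool) : bool -> C := fun a => if a == r then 1 else 0.

Definition ket_hat (r : bool) : bool -> C :=
  fun a => (sqrtC 2)^-1 * (if a then (-1) ^+ r else 1).

(* |psi^s_{r0 r1}>_{A0 A1} = |r0>_{A_s} (x) |r1^>_{A_{not s}};
   basis of A0A1 indexed by (a0, a1) : bool * bool *)
Definition psi (s r0 r1 : bool) : bool * bool -> C :=
  fun a => if s then ket_hat r1 a.1 * ket r0 a.2
           else ket r0 a.1 * ket_hat r1 a.2.

Definition Abasis (n : nat) := {ffun 'I_n -> bool * bool}.

Definition Psi n (s r0 r1 : bits n) : Abasis n -> C :=
  fun x => \prod_(j < n) psi (s j) (r0 j) (r1 j) (x j).

Definition unitary (I K : finType) (U : K -> I -> C) : Prop :=
  (forall i i' : I, \sum_(k : K) (U k i)^* * U k i' = (i == i')%:R) /\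
  (forall k k' : K, \sum_(i : I) U k i * (U k' i)^* = (k == k')%:R).

Definition pure_state (I : finType) (v : I -> C) : Prop :=
  \sum_(i : I) (v i)^* * v i = 1.

Definition proj_meas (O B : finType) (P : O -> B -> B -> C) : Prop :=
  (forall o (b b' : B), (P o b b')^* = P o b' b) /\
  (forall o (b b' : B), \sum_(c : B) P o b c * P o c b' = P o b b') /\
  (forall (b b' : B), \sum_(o : O) P o b b' = (b == b')%:R).

Definition Phi n (E B0 B1 B' : finType)
  (U : (B0 * B1 * B') -> (Abasis n * E) -> C) (chi : E -> C)
  (s r0 r1 : bits n) : B0 * B1 * B' -> C :=
  fun k => \sum_(x : Abasis n * E) U k x * (Psi s r0 r1 x.1 * chi x.2).

Definition expect3 (B0 B1 B' : finType) (v : B0 * B1 * B' -> C)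
  (P0 : B0 -> B0 -> C) (P1 : B1 -> B1 -> C) (R : B' -> B' -> C) : C :=
  \sum_(k : B0 * B1 * B') \sum_(k' : B0 * B1 * B')
     (v k)^* * (P0 k.1.1 k'.1.1 * P1 k.1.2 k'.1.2 * R k.2 k'.2) * v k'.

(* p_n^gamma ; Pi0 e s b' is Pi^e_{0 s b'}, Pi1 e s b' is Pi^e_{1 s b'} *)
Definition p_win n (gamma : C) (E B0 B1 B' : finType)
  (U : (B0 * B1 * B') -> (Abasis n * E) -> C) (chi : E -> C)
  (R : bool -> B' -> B' -> C)
  (Pi0 : bits n -> bits n -> bool -> B0 -> B0 -> C)
  (Pi1 : bits n -> bits n -> bool -> B1 -> B1 -> C) : C :=
  (2%:R ^+ (3 * n))^-1 *
  \sum_(q in Qset n gamma) \sum_(r0 : bits n) \sum_(r1 : bits n)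
  \sum_(s : bits n) \sum_(b' : bool)
    expect3 (Phi U chi s r0 r1)
      (Pi0 (bxor (if b' then r1 else r0) q.1) s b')
      (Pi1 (bxor (if b' then r0 else r1) q.2) s b')
      (R b').

End Quantum.

(* Fix the pair [q] of tolerated error patterns. The winning sum is then [sum_s N_s], where
   [N_s = sum_(rho, b) |X_(s,rho,b) Phi^s_rho|^2] and [X_(s,rho,b)] projects onto Bob's
   winning outcomes. Purifying the uniform choice of [rho = (r0, r1)] gives a vector
   [Phi_pur] of squared norm [4^n] and, for every [s], a vector [v_s] with
   [<Phi_pur, v_s> = N_s]. The winning vectors for [s] are fixed by Bob's [B1]-projectors
   and those for [t] by his [B0]-projectors, so both can be inserted into [<v_s, v_t>];
   a Cauchy-Schwarz step and a single-qubit Gram computation (overlap [1/2] wherever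
   [s_j <> t_j]) give [|<v_s, v_t>|^2 <= 2^-d(s,t) N_s N_t]. By AM-GM,
   [|sum_s v_s|^2 <= (1 + 1/sqrt 2)^n sum_s N_s], and Cauchy-Schwarz against [Phi_pur]
   yields [sum_s N_s <= 4^n (1 + 1/sqrt 2)^n]; dividing by [2^(3n)] gives the bound. *)

From HB Require Import structures.
From mathcomp Require Import all_boot all_order all_algebra.
From mathcomp Require Import ring.
Import Order.TTheory GRing.Theory Num.Theory.
Local Open Scope ring_scope.
Set Implicit Arguments. Unset Strict Implicit. Unset Printing Implicit Defensive.

Section FiniteHilbertSpace.
Variable C : numClosedFieldType.
Implicit Types I J : finType.

Lemma conjC_mul_ge0 (x : C) : 0 <= x^* * x.
Proof. by rewrite mulrC mul_conjC_ge0. Qed.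

Lemma norm_le_AMGM (z a b c : C) : 0 <= a -> 0 <= b -> 0 <= c ->
  `|z| ^+ 2 <= c ^+ 2 * a * b -> `|z| <= c * (a + b) / 2.
Proof.
move=> a0 b0 c0 le_z; rewrite -ler_sqr ?nnegrE //; last first.
  by rewrite mulr_ge0 ?invr_ge0 ?ler0n // mulr_ge0 // addr_ge0.
apply: le_trans le_z _; rewrite -subr_ge0.
have -> : (c * (a + b) / 2) ^+ 2 - c ^+ 2 * a * b = (c * (a - b) / 2) ^+ 2 by field.
have real2 : (2 : C) \is Num.real by rewrite ger0_real ?ler0n.
apply: real_exprn_even_ge0 => //.
by rewrite rpredM ?rpredV // rpredM ?rpredB ?ger0_real.
Qed.

Lemma big_pair I J (F : I * J -> C) : \sum_(p : I * J) F p = \sum_i \sum_j F (i, j).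
Proof. by rewrite pair_bigA; apply: eq_bigr => -[]. Qed.

Lemma exchange_big3 I J (L : finType) (F : I -> J -> L -> C) :
  \sum_i \sum_j \sum_l F i j l = \sum_l \sum_i \sum_j F i j l.
Proof. by under eq_bigr do rewrite exchange_big /=; rewrite exchange_big. Qed.

Lemma sum_delta I (i0 : I) (G : I -> C) : \sum_i (i0 == i)%:R * G i = G i0.
Proof.
rewrite (bigD1 i0) //= eqxx mul1r big1 ?addr0 // => i.
by rewrite eq_sym => /negbTE ->; rewrite mul0r.
Qed.

Lemma natr_eq_ffun I (T : eqType) (f g : {ffun I -> T}) :
  (f == g)%:R = \prod_i (f i == g i)%:R :> C.
Proof.
have [->|fg] := eqVneq f g; first by rewrite big1 // => i _; rewrite eqxx.
have /forallPn [i /negbTE fgi] : ~~ [forall i, f i == g i].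
  by apply: contra fg => /forallP fg; apply/eqP/ffunP => i; apply/eqP.
by rewrite (bigD1 i) //= fgi mul0r.
Qed.

Definition dotv I (u v : I -> C) := \sum_i (u i)^* * v i.
Definition mulMv I (M : I -> I -> C) (v : I -> C) : I -> C :=
  fun i => \sum_j M i j * v j.
Definition mulM I (M N : I -> I -> C) : I -> I -> C :=
  fun i k => \sum_j M i j * N j k.
Definition idM I : I -> I -> C := fun i j => (i == j)%:R.
Definition herm I (M : I -> I -> C) := forall i j, (M i j)^* = M j i.
Definition projector I (M : I -> I -> C) := herm M /\ mulM M M =2 M.

Lemma dotv_ge0 I (u : I -> C) : 0 <= dotv u u.
Proof. by apply: sumr_ge0 => i _; apply: conjC_mul_ge0. Qed.

Lemma dotv_eq0 I (u : I -> C) : dotv u u = 0 -> u =1 (fun=> 0).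
Proof.
move/eqP; rewrite psumr_eq0 => [/allP uP i|i _]; last exact: conjC_mul_ge0.
by move: (uP i (mem_index_enum i)); rewrite /= mulrC mul_conjC_eq0 => /eqP.
Qed.

Lemma dotvC I (u v : I -> C) : dotv v u = (dotv u v)^*.
Proof. by rewrite /dotv rmorph_sum; apply: eq_bigr => i _; rewrite rmorphM /= conjCK mulrC. Qed.

Lemma dotv_CauchySchwarz I (u v : I -> C) :
  `|dotv u v| ^+ 2 <= dotv u u * dotv v v.
Proof.
set z := dotv u v; set a := dotv u u; set b := dotv v v.
have a_ge0 : 0 <= a by apply: dotv_ge0.
have [a0|a_neq0] := eqVneq a 0.
  have -> : z = 0 by rewrite /z /dotv big1 // => i _; rewrite (dotv_eq0 a0) conjC0 mul0r.
  by rewrite a0 normr0 expr0n mul0r.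
have a_conj : a^* = a by apply: geC0_conj.
have expand : dotv (fun i => a * v i - z * u i) (fun i => a * v i - z * u i) =
              a * (a * b - z * z^*).
  rewrite /dotv (eq_bigr (fun i => a * a * ((v i)^* * v i) - a * z * ((v i)^* * u i)
       - a * z^* * ((u i)^* * v i) + z * z^* * ((u i)^* * u i))); last first.
    by move=> i _; rewrite rmorphB !rmorphM /= a_conj; ring.
  rewrite !big_split /= !sumrN -!mulr_sumr.
  rewrite -/(dotv v v) -/(dotv v u) -/(dotv u v) -/(dotv u u) (dotvC u v) -/z -/a -/b; ring.
have : 0 <= a * (a * b - z * z^*) by rewrite -expand dotv_ge0.
by rewrite pmulr_rge0 ?lt_def ?a_neq0 // subr_ge0 normCK.
Qed.

Lemma eq_dotv I (u u' w w' : I -> C) :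
  u =1 u' -> w =1 w' -> dotv u w = dotv u' w'.
Proof. by move=> eu ew; apply: eq_bigr => i _; rewrite eu ew. Qed.

Lemma eq_mulMv I (M N : I -> I -> C) (v w : I -> C) :
  M =2 N -> v =1 w -> mulMv M v =1 mulMv N w.
Proof. by move=> eM ev i; apply: eq_bigr => j _; rewrite eM ev. Qed.

Lemma mulMvA I (M N : I -> I -> C) v : mulMv M (mulMv N v) =1 mulMv (mulM M N) v.
Proof.
move=> i; rewrite /mulMv /mulM.
under eq_bigr do rewrite mulr_sumr.
rewrite exchange_big /=; apply: eq_bigr => k _.
by rewrite mulr_suml; apply: eq_bigr => j _; rewrite mulrA.
Qed.

Lemma mulM1l I (M : I -> I -> C) : mulM (@idM I) M =2 M.
Proof. by move=> i k; rewrite /mulM /idM sum_delta. Qed.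

Lemma mulM1r I (M : I -> I -> C) : mulM M (@idM I) =2 M.
Proof.
move=> i k; rewrite /mulM /idM (eq_bigr (fun j => (k == j)%:R * M i j)).
  by rewrite sum_delta.
by move=> j _; rewrite eq_sym mulrC.
Qed.

Lemma mulMv_eq0 I (M : I -> I -> C) v : M =2 (fun _ _ => 0) -> mulMv M v =1 (fun=> 0).
Proof. by move=> M0 i; rewrite /mulMv big1 // => j _; rewrite M0 mul0r. Qed.

Lemma herm_dotv I (M : I -> I -> C) u w :
  herm M -> dotv u (mulMv M w) = dotv (mulMv M u) w.
Proof.
move=> hM; rewrite /dotv /mulMv.
under eq_bigr do rewrite mulr_sumr.
rewrite exchange_big /=; apply: eq_bigr => k _.
rewrite rmorph_sum mulr_suml; apply: eq_bigr => j _.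
by rewrite rmorphM /= hM mulrCA !mulrA.
Qed.

Lemma projector_dotv I (P : I -> I -> C) u w :
  projector P -> dotv u (mulMv P w) = dotv (mulMv P u) (mulMv P w).
Proof.
move=> [hP idemP]; rewrite -herm_dotv //; apply: eq_dotv => // i.
by rewrite mulMvA; apply: eq_mulMv.
Qed.

Lemma projector_idM I : projector (@idM I).
Proof. by split; [move=> i j; rewrite /idM rmorph_nat eq_sym | exact: mulM1l]. Qed.

Lemma dotv_sumr I J (u : I -> C) (w : J -> I -> C) :
  dotv u (fun i => \sum_j w j i) = \sum_j dotv u (w j).
Proof. by rewrite /dotv; under eq_bigr do rewrite mulr_sumr; rewrite exchange_big. Qed.

Lemma dotv_suml I J (u : J -> I -> C) (w : I -> C) :
  dotv (fun i => \sum_j u j i) w = \sum_j dotv (u j) w.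
Proof.
rewrite /dotv; under eq_bigr do rewrite rmorph_sum mulr_suml.
by rewrite exchange_big.
Qed.

Lemma mulMv_sumM I J (P : J -> I -> I -> C) v :
  mulMv (fun a b => \sum_j P j a b) v =1 (fun i => \sum_j mulMv (P j) v i).
Proof.
move=> i; rewrite /mulMv; under eq_bigr do rewrite mulr_suml.
by rewrite exchange_big.
Qed.

Lemma sum_gram_diag I J (M : J -> I -> C) (a : I -> C) :
  (forall i i', i != i' -> \sum_j (M j i)^* * M j i' = 0) ->
  \sum_j (\sum_i M j i * a i)^* * (\sum_i M j i * a i) =
  \sum_i (\sum_j (M j i)^* * M j i) * ((a i)^* * a i).
Proof.
move=> M_orth.
transitivity (\sum_j \sum_i \sum_i' ((M j i)^* * M j i') * ((a i)^* * a i')).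
  apply: eq_bigr => j _; rewrite rmorph_sum mulr_suml; apply: eq_bigr => i _.
  by rewrite mulr_sumr; apply: eq_bigr => i' _; rewrite rmorphM /=; ring.
rewrite exchange_big /=; apply: eq_bigr => i _.
rewrite exchange_big /= (bigD1 i) //= [X in _ + X]big1 ?addr0 -?mulr_suml //.
by move=> i' ii'; rewrite -mulr_suml M_orth ?mul0r // eq_sym.
Qed.

Lemma proj_meas_projector (O B : finType) (P : O -> B -> B -> C) o :
  proj_meas P -> projector (P o).
Proof. by case=> hP [idemP _]; split=> // ? ?; apply: idemP. Qed.

Lemma proj_meas_sum (O B : finType) (P : O -> B -> B -> C) :
  proj_meas P -> (fun a b => \sum_o P o a b) =2 @idM B.
Proof. by case=> _ [_ sumP] a b; rewrite sumP. Qed.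

Lemma proj_meas_orth (B : finType) (P : bool -> B -> B -> C) b :
  proj_meas P -> mulM (P b) (P (~~ b)) =2 (fun _ _ => 0).
Proof.
move=> hP a c.
have Pnot : forall j, P (~~ b) j c = idM j c - P b j c.
  by move=> j; rewrite -(proj_meas_sum hP) big_bool; case: b => /=; ring.
rewrite /mulM; under eq_bigr do rewrite Pnot mulrBr.
rewrite sumrB -/(mulM (P b) (@idM B) a c) mulM1r.
by case: (proj_meas_projector b hP) => _ idemP; rewrite -/(mulM _ _ a c) idemP subrr.
Qed.

Section Tensor3.
Variables B0 B1 B2 : finType.

Definition tens3 (P0 : B0 -> B0 -> C) (P1 : B1 -> B1 -> C) (P2 : B2 -> B2 -> C)
  : B0 * B1 * B2 -> B0 * B1 * B2 -> C :=
  fun k k' => P0 k.1.1 k'.1.1 * P1 k.1.2 k'.1.2 * P2 k.2 k'.2.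

Lemma mulM_tens3 P0 P1 P2 Q0 Q1 Q2 :
  mulM (tens3 P0 P1 P2) (tens3 Q0 Q1 Q2) =2 tens3 (mulM P0 Q0) (mulM P1 Q1) (mulM P2 Q2).
Proof.
move=> k k'; rewrite /mulM /tens3 big_pair.
rewrite (eq_bigr (fun a => \sum_c (P0 k.1.1 a.1 * Q0 a.1 k'.1.1) *
  (P1 k.1.2 a.2 * Q1 a.2 k'.1.2) * (P2 k.2 c * Q2 c k'.2))); last first.
  by move=> a _; apply: eq_bigr => c _ /=; ring.
under eq_bigr do rewrite -big_distrr /=.
rewrite -big_distrl /=; congr (_ * _).
by rewrite big_pair /= big_distrl /=; apply: eq_bigr => a _; rewrite big_distrr.
Qed.

Lemma herm_tens3 P0 P1 P2 : herm P0 -> herm P1 -> herm P2 -> herm (tens3 P0 P1 P2).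
Proof. by move=> h0 h1 h2 k k'; rewrite /tens3 !rmorphM /= h0 h1 h2. Qed.

Lemma projector_tens3 P0 P1 P2 :
  projector P0 -> projector P1 -> projector P2 -> projector (tens3 P0 P1 P2).
Proof.
move=> [h0 i0] [h1 i1] [h2 i2]; split; first exact: herm_tens3.
by move=> k k'; rewrite mulM_tens3 /tens3 i0 i1 i2.
Qed.

Lemma tens3_sum0 (O : finType) (P : O -> B0 -> B0 -> C) P1 P2 :
  tens3 (fun a b => \sum_o P o a b) P1 P2 =2 (fun k k' => \sum_o tens3 (P o) P1 P2 k k').
Proof. by move=> k k'; rewrite /tens3 !mulr_suml; apply: eq_bigr => o _; ring. Qed.

Lemma tens3_sum1 (O : finType) P0 (P : O -> B1 -> B1 -> C) P2 :
  tens3 P0 (fun a b => \sum_o P o a b) P2 =2 (fun k k' => \sum_o tens3 P0 (P o) P2 k k').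
Proof. by move=> k k'; rewrite /tens3 mulr_sumr mulr_suml; apply: eq_bigr => o _; ring. Qed.

End Tensor3.
End FiniteHilbertSpace.
Arguments idM {C I}.

(* Integer models of [sqrtC 2 * psi] and of the single-qubit overlaps, so that
   the finitely many single-qubit identities below are decided by computation. *)
Definition sgnZ (r a : bool) : int := if a then (-1) ^+ r else 1.
Definition psiZ (s r0 r1 : bool) (a : bool * bool) : int :=
  if s then sgnZ r1 a.1 * (a.2 == r0)%:Z else (a.1 == r0)%:Z * sgnZ r1 a.2.

Definition bools := [:: true; false].
Definition bool2 := [seq (x, y) | x <- bools, y <- bools].
Definition sumZ_bool2 (F : bool * bool -> int) : int :=
  foldr (fun a acc => F a + acc) 0 bool2.

Lemma all_bools (P : pred bool) : all P bools -> forall b, P b.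
Proof. by move=> /allP P_all b; apply: P_all; case: b. Qed.

Lemma all_bool2 (P : pred (bool * bool)) : all P bool2 -> forall x, P x.
Proof. by move=> /allP P_all x; apply: P_all; case: x => [[] []]. Qed.

Definition overlapZ (s t : bool) (x y : bool * bool) : int :=
  sumZ_bool2 (fun a => psiZ s x.1 x.2 a * psiZ t y.1 y.2 a).
Definition maskZ (b e0 e1 q0 q1 s t : bool) (y x : bool * bool) : int :=
  ((if b then y.2 else y.1) (+) q0 == e0)%:Z *
  ((if b then x.1 else x.2) (+) q1 == e1)%:Z * overlapZ s t x y.
Definition gramZ (b e0 e1 q0 q1 s t : bool) (x x' : bool * bool) : int :=
  sumZ_bool2 (fun y => maskZ b e0 e1 q0 q1 s t y x * maskZ b e0 e1 q0 q1 s t y x').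

Lemma gramZ_offdiag_check :
  all (fun b => all (fun e0 => all (fun e1 => all (fun q0 => all (fun q1 =>
  all (fun s => all (fun t => all (fun x => all (fun x' =>
    (x != x') ==> (gramZ b e0 e1 q0 q1 s t x x' == 0))
  bool2) bool2) bools) bools) bools) bools) bools) bools) bools.
Proof. vm_compute. reflexivity. Qed.

Lemma gramZ_diag_check :
  all (fun b => all (fun e0 => all (fun e1 => all (fun q0 => all (fun q1 =>
  all (fun s => all (fun t => all (fun x =>
    gramZ b e0 e1 q0 q1 s t x x <=
      (if s != t then 2 else 4) * ((if b then x.1 else x.2) (+) q1 == e1)%:Z)
  bool2) bools) bools) bools) bools) bools) bools) bools.
Proof. vm_compute. reflexivity. Qed.

Lemma gramZ_offdiag b e0 e1 q0 q1 s t x x' :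
  x != x' -> gramZ b e0 e1 q0 q1 s t x x' = 0.
Proof.
move: gramZ_offdiag_check => /all_bools/(_ b)/all_bools/(_ e0)/all_bools/(_ e1).
move=> /all_bools/(_ q0)/all_bools/(_ q1)/all_bools/(_ s)/all_bools/(_ t).
by move=> /all_bool2/(_ x)/all_bool2/(_ x') /implyP xx' /xx' /eqP.
Qed.

Lemma gramZ_diag_le b e0 e1 q0 q1 s t x :
  gramZ b e0 e1 q0 q1 s t x x <=
    (if s != t then 2 else 4) * ((if b then x.1 else x.2) (+) q1 == e1)%:Z.
Proof.
move: gramZ_diag_check => /all_bools/(_ b)/all_bools/(_ e0)/all_bools/(_ e1).
move=> /all_bools/(_ q0)/all_bools/(_ q1)/all_bools/(_ s)/all_bools/(_ t).
by move=> /all_bool2/(_ x).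
Qed.

Section SingleQubit.
Variable C : numClosedFieldType.

Definition invsqrt2 : C := (sqrtC 2)^-1.

Lemma invsqrt2_ge0 : 0 <= invsqrt2.
Proof. by rewrite invr_ge0 sqrtC_ge0 ler0n. Qed.

Lemma invsqrt2_conj : invsqrt2^* = invsqrt2.
Proof. exact: geC0_conj invsqrt2_ge0. Qed.

Lemma invsqrt2_sqr : invsqrt2 * invsqrt2 = 2^-1.
Proof. by rewrite /invsqrt2 -invfM -expr2 sqrtCK. Qed.

Lemma psiE s r0 r1 a : psi C s r0 r1 a = invsqrt2 * (psiZ s r0 r1 a)%:~R.
Proof.
case: s r0 r1 a => [] [] [] [[] []];
  rewrite /psi /ket /ket_hat /psiZ /sgnZ /invsqrt2 /= ?expr1 ?expr0 ?intrM ?intrN /=; ring.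
Qed.

Lemma sumZ_bool2E (F : bool * bool -> int) :
  (sumZ_bool2 F)%:~R = \sum_(a : bool * bool) (F a)%:~R :> C.
Proof. by rewrite big_pair !big_bool /= !intrD addr0; ring. Qed.

Definition overlap1 s t (x y : bool * bool) : C :=
  \sum_a psi C s x.1 x.2 a * (psi C t y.1 y.2 a)^*.
Definition mask1 (b e0 e1 q0 q1 s t : bool) (y x : bool * bool) : C :=
  ((if b then y.2 else y.1) (+) q0 == e0)%:R *
  ((if b then x.1 else x.2) (+) q1 == e1)%:R * (overlap1 s t x y)^*.
Definition gram1 (b e0 e1 q0 q1 s t : bool) (x x' : bool * bool) : C :=
  \sum_y (mask1 b e0 e1 q0 q1 s t y x)^* * mask1 b e0 e1 q0 q1 s t y x'.

Lemma overlap1E s t x y : overlap1 s t x y = 2^-1 * (overlapZ s t x y)%:~R.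
Proof.
rewrite /overlap1 /overlapZ sumZ_bool2E mulr_sumr; apply: eq_bigr => a _.
rewrite !psiE rmorphM /= invsqrt2_conj rmorph_int intrM -invsqrt2_sqr; ring.
Qed.

Lemma mask1E b e0 e1 q0 q1 s t y x :
  mask1 b e0 e1 q0 q1 s t y x = 2^-1 * (maskZ b e0 e1 q0 q1 s t y x)%:~R.
Proof.
rewrite /mask1 /maskZ overlap1E rmorphM /= rmorph_int geC0_conj ?invr_ge0 ?ler0n //.
by rewrite !intrM; ring.
Qed.

Lemma gram1E b e0 e1 q0 q1 s t x x' :
  gram1 b e0 e1 q0 q1 s t x x' = 4^-1 * (gramZ b e0 e1 q0 q1 s t x x')%:~R.
Proof.
rewrite /gram1 /gramZ sumZ_bool2E mulr_sumr; apply: eq_bigr => y _.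
rewrite !mask1E rmorphM /= rmorph_int geC0_conj ?invr_ge0 ?ler0n // intrM.
have -> : (4 : C)^-1 = 2^-1 * 2^-1 by rewrite -invfM -natrM.
ring.
Qed.

Lemma gram1_offdiag b e0 e1 q0 q1 s t x x' :
  x != x' -> gram1 b e0 e1 q0 q1 s t x x' = 0.
Proof. by move=> xx'; rewrite gram1E gramZ_offdiag // mulr0. Qed.

Lemma gram1_ge0 b e0 e1 q0 q1 s t x : 0 <= gram1 b e0 e1 q0 q1 s t x x.
Proof. by apply: sumr_ge0 => y _; apply: conjC_mul_ge0. Qed.

Lemma gram1_diag_le b e0 e1 q0 q1 s t x :
  gram1 b e0 e1 q0 q1 s t x x <=
  (if s != t then 2^-1 else 1) * ((if b then x.1 else x.2) (+) q1 == e1)%:R.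
Proof.
rewrite gram1E; have := gramZ_diag_le b e0 e1 q0 q1 s t x; rewrite -(ler_int C) => le_gram.
apply: le_trans (ler_wpM2l _ le_gram) _; first by rewrite invr_ge0 ler0n.
rewrite intrM mulrA; apply: ler_wpM2r; first by rewrite ler0n.
by case: (s != t); rewrite /= le_eqVlt; apply/orP; left; apply/eqP; field.
Qed.

End SingleQubit.

Section HammingWeight.
Variables (C : numClosedFieldType) (n : nat).

Lemma bxorC (s t : bits n) : bxor s t = bxor t s.
Proof. by apply/ffunP => j; rewrite !ffunE addbC. Qed.

Lemma expr_hw (h : C) (k : bits n) : h ^+ hw k = \prod_j (if k j then h else 1).
Proof. by rewrite -big_mkcond /= /hw -prodr_const; apply: eq_bigl => j; rewrite inE. Qed.

Lemma sum_expr_hw_bxor (h : C) (s : bits n) : \sum_t h ^+ hw (bxor s t) = (1 + h) ^+ n.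
Proof.
have bxorK t : bxor s (bxor s t) = t by apply/ffunP => j; rewrite !ffunE addKb.
rewrite (reindex_inj (can_inj bxorK)) /=.
under eq_bigr do rewrite bxorK expr_hw.
rewrite -(bigA_distr_bigA (fun (j : 'I_n) (b : bool) => if b then h else 1)) /=.
by rewrite big_bool prodr_const card_ord addrC.
Qed.

End HammingWeight.

Section Strategy.
Variable C : numClosedFieldType.
Variables (n : nat) (E B0 B1 B2 : finType).
Variable U : (B0 * B1 * B2) -> (Abasis n * E) -> C.
Variable chi : E -> C.
Variable R : bool -> B2 -> B2 -> C.
Variable Pi0 : bits n -> bits n -> bool -> B0 -> B0 -> C.
Variable Pi1 : bits n -> bits n -> bool -> B1 -> B1 -> C.
Hypothesis chi_pure : pure_state chi.
Hypothesis U_unitary : unitary U.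
Hypothesis R_meas : proj_meas R.
Hypothesis Pi0_meas : forall s b, proj_meas (fun e => Pi0 e s b).
Hypothesis Pi1_meas : forall s b, proj_meas (fun e => Pi1 e s b).
Local Notation K := (B0 * B1 * B2)%type.
Local Notation invsqrt2 := (invsqrt2 C).

Variable q : bits n * bits n.

Definition r0of (rho : Abasis n) : bits n := [ffun j => (rho j).1].
Definition r1of (rho : Abasis n) : bits n := [ffun j => (rho j).2].
Definition rsel (rho : Abasis n) (b : bool) : bits n := if b then r1of rho else r0of rho.

Definition win0 rho b := bxor (rsel rho b) q.1.
Definition win1 rho b := bxor (rsel rho (~~ b)) q.2.

Definition Phis s rho : K -> C := Phi U chi s (r0of rho) (r1of rho).
Definition winP s rho b :=
  tens3 (Pi0 (win0 rho b) s b) (Pi1 (win1 rho b) s b) (R b).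
Definition winv s rho b : K -> C := mulMv (winP s rho b) (Phis s rho).
Definition Nwin s := \sum_rho \sum_b dotv (winv s rho b) (winv s rho b).

Lemma projector_winP s rho b : projector (winP s rho b).
Proof.
apply: projector_tens3; first exact: proj_meas_projector (Pi0_meas s b).
  exact: proj_meas_projector (Pi1_meas s b).
exact: proj_meas_projector R_meas.
Qed.

Lemma Nwin_ge0 s : 0 <= Nwin s.
Proof. by apply: sumr_ge0 => rho _; apply: sumr_ge0 => b _; apply: dotv_ge0. Qed.

Lemma sum_bits2 (F : bits n -> bits n -> C) :
  \sum_r0 \sum_r1 F r0 r1 = \sum_(rho : Abasis n) F (r0of rho) (r1of rho).
Proof.
rewrite pair_bigA /= (reindex (fun rho : Abasis n => (r0of rho, r1of rho))) //=.
exists (fun p : bits n * bits n => [ffun j => (p.1 j, p.2 j)] : Abasis n).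
  by move=> rho _; apply/ffunP => j; rewrite !ffunE /= -surjective_pairing.
by move=> [r0 r1] _; congr pair; apply/ffunP => j; rewrite !ffunE.
Qed.

Lemma expect3E (v : K -> C) P0 P1 P2 :
  expect3 v P0 P1 P2 = dotv v (mulMv (tens3 P0 P1 P2) v).
Proof.
rewrite /expect3 /dotv /mulMv /tens3; apply: eq_bigr => k _.
by rewrite mulr_sumr; apply: eq_bigr => k' _; rewrite !mulrA.
Qed.

Lemma sum_expect3_Nwin :
  \sum_r0 \sum_r1 \sum_s \sum_b
    expect3 (Phi U chi s r0 r1)
      (Pi0 (bxor (if b then r1 else r0) q.1) s b)
      (Pi1 (bxor (if b then r0 else r1) q.2) s b) (R b)
  = \sum_s Nwin s.
Proof.
rewrite (sum_bits2 (fun r0 r1 => \sum_s \sum_b _)) exchange_big /=.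
apply: eq_bigr => s _; apply: eq_bigr => rho _; apply: eq_bigr => b _.
by rewrite expect3E -(projector_dotv _ _ (projector_winP s rho b)); case: b.
Qed.

Definition Phi_pur (ak : Abasis n * K) : C := \sum_e U ak.2 (ak.1, e) * chi e.
Definition vwin s (ak : Abasis n * K) : C :=
  \sum_rho \sum_b (Psi C s (r0of rho) (r1of rho) ak.1)^* * winv s rho b ak.2.

Lemma PhiE s r0 r1 k : Phi U chi s r0 r1 k = \sum_a Psi C s r0 r1 a * Phi_pur (a, k).
Proof.
rewrite /Phi big_pair; apply: eq_bigr => a _.
by rewrite /Phi_pur mulr_sumr; apply: eq_bigr => e _ /=; ring.
Qed.

Lemma dotv_Phi_pur_vwin s : dotv Phi_pur (vwin s) = Nwin s.
Proof.
transitivity (\sum_rho \sum_b dotv (Phis s rho) (winv s rho b)); last first.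
  apply: eq_bigr => rho _; apply: eq_bigr => b _.
  exact: projector_dotv (projector_winP s rho b).
rewrite /dotv big_pair exchange_big /=.
transitivity (\sum_k \sum_a \sum_rho \sum_b (Phi_pur (a, k))^* *
      ((Psi C s (r0of rho) (r1of rho) a)^* * winv s rho b k)).
  apply: eq_bigr => k _; apply: eq_bigr => a _.
  by rewrite mulr_sumr; apply: eq_bigr => rho _; rewrite mulr_sumr.
rewrite exchange_big3; apply: eq_bigr => rho _.
rewrite exchange_big3; apply: eq_bigr => b _; apply: eq_bigr => k _.
rewrite /Phis PhiE rmorph_sum mulr_suml; apply: eq_bigr => a _.
by rewrite rmorphM /=; ring.
Qed.

Lemma dotv_Phi_pur : dotv Phi_pur Phi_pur = (4 ^ n)%:R.
Proof.
case: U_unitary => U_isometry _.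
have Phi_pur_norm a : \sum_k (Phi_pur (a, k))^* * Phi_pur (a, k) = 1.
  transitivity (\sum_k \sum_e \sum_e' ((U k (a, e))^* * U k (a, e')) * ((chi e)^* * chi e')).
    apply: eq_bigr => k _; rewrite /Phi_pur /= rmorph_sum mulr_suml; apply: eq_bigr => e _.
    by rewrite mulr_sumr; apply: eq_bigr => e' _; rewrite rmorphM /=; ring.
  rewrite -chi_pure exchange_big /=; apply: eq_bigr => e _.
  rewrite exchange_big /= (eq_bigr (fun e' => (e == e')%:R * ((chi e)^* * chi e'))).
    by rewrite sum_delta.
  by move=> e' _; rewrite -mulr_suml U_isometry xpair_eqE eqxx.
rewrite /dotv big_pair (eq_bigr (fun=> 1)) ?sumr_const; last by move=> a _; apply: Phi_pur_norm.
by rewrite card_ffun card_prod card_bool card_ord.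
Qed.

Definition overlap s t (rho rho' : Abasis n) : C :=
  \sum_a Psi C s (r0of rho) (r1of rho) a * (Psi C t (r0of rho') (r1of rho') a)^*.

Lemma winv_orth s t rho rho' b : dotv (winv s rho b) (winv t rho' (~~ b)) = 0.
Proof.
rewrite /winv -herm_dotv; last by case: (projector_winP s rho b).
rewrite /dotv big1 // => k _; rewrite (mulMvA _ _ _ k) mulMv_eq0 ?mulr0 // => a c.
by rewrite mulM_tens3 /tens3 (proj_meas_orth _ R_meas) mulr0.
Qed.

Lemma dotv_vwin s t : dotv (vwin s) (vwin t) =
  \sum_rho \sum_rho' \sum_b overlap s t rho rho' * dotv (winv s rho b) (winv t rho' b).
Proof.
transitivity (\sum_rho \sum_rho' \sum_b \sum_c
    overlap s t rho rho' * dotv (winv s rho b) (winv t rho' c)); last first.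
  apply: eq_bigr => rho _; apply: eq_bigr => rho' _; apply: eq_bigr => b _.
  by rewrite big_bool; case: b; rewrite /= winv_orth mulr0 ?addr0 ?add0r.
rewrite /dotv big_pair.
transitivity (\sum_a \sum_k \sum_rho \sum_b \sum_rho' \sum_c
  (Psi C s (r0of rho) (r1of rho) a * (Psi C t (r0of rho') (r1of rho') a)^*) *
  ((winv s rho b k)^* * winv t rho' c k)).
  apply: eq_bigr => a _; apply: eq_bigr => k _.
  rewrite /vwin /= rmorph_sum mulr_suml; apply: eq_bigr => rho _.
  rewrite rmorph_sum mulr_suml; apply: eq_bigr => b _.
  rewrite mulr_sumr; apply: eq_bigr => rho' _.
  rewrite mulr_sumr; apply: eq_bigr => c _.
  by rewrite rmorphM /= conjCK; ring.
rewrite exchange_big3; apply: eq_bigr => rho _.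
rewrite exchange_big3 [RHS]exchange_big /=; apply: eq_bigr => b _.
rewrite exchange_big3; apply: eq_bigr => rho' _.
rewrite exchange_big3; apply: eq_bigr => c _.
rewrite /overlap big_distrl /=; apply: eq_bigr => a _.
by rewrite big_distrr.
Qed.

Definition Pguess s t b x y := tens3 (Pi0 x t b) (Pi1 y s b) (@idM C B2).

Lemma projector_Pguess s t b x y : projector (Pguess s t b x y).
Proof.
apply: projector_tens3; first exact: proj_meas_projector (Pi0_meas t b).
  exact: proj_meas_projector (Pi1_meas s b).
exact: projector_idM.
Qed.

Lemma winv_fix0 t rho b :
  mulMv (tens3 (Pi0 (win0 rho b) t b) idM idM) (winv t rho b) =1 winv t rho b.
Proof.
move=> k; rewrite /winv mulMvA; apply: eq_mulMv => // a c.
rewrite /winP mulM_tens3 /tens3 !mulM1l.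
by case: (proj_meas_projector (win0 rho b) (Pi0_meas t b)) => _ ->.
Qed.

Lemma winv_fix1 s rho b :
  mulMv (tens3 idM (Pi1 (win1 rho b) s b) idM) (winv s rho b) =1 winv s rho b.
Proof.
move=> k; rewrite /winv mulMvA; apply: eq_mulMv => // a c.
rewrite /winP mulM_tens3 /tens3 !mulM1l.
by case: (proj_meas_projector (win1 rho b) (Pi1_meas s b)) => _ ->.
Qed.

Lemma dotv_winv_Pguess s t rho rho' b :
  let P := Pguess s t b (win0 rho' b) (win1 rho b) in
  dotv (winv s rho b) (winv t rho' b) = dotv (mulMv P (winv s rho b)) (mulMv P (winv t rho' b)).
Proof.
move=> P; rewrite -(projector_dotv _ _ (projector_Pguess _ _ _ _ _)).
rewrite -(eq_dotv (winv_fix1 s rho b) (winv_fix0 t rho' b)) -herm_dotv; last first.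
  apply: herm_tens3; first by case: (@projector_idM C B0).
    by case: (proj_meas_projector (win1 rho b) (Pi1_meas s b)).
  by case: (@projector_idM C B2).
apply: eq_dotv => // k; rewrite [LHS]mulMvA; apply: eq_mulMv => // a c.
by rewrite mulM_tens3 /tens3 mulM1l mulM1r mulM1l.
Qed.

(* Splitting [<v_s, v_t>] according to Bob's guesses [x, y] puts it in the form
   [<maskedA, projB>]; the Gram matrix of [mask] is diagonal and factorises over
   the qubits, which bounds the norm of [maskedA] by [2^-d(s,t) N_s]. *)
Definition projA s t b x y rho : K -> C := mulMv (Pguess s t b x y) (winv s rho b).
Definition projB s t b x y rho' : K -> C :=
  fun k => (win0 rho' b == x)%:R * mulMv (Pguess s t b x y) (winv t rho' b) k.
Definition mask s t b x y rho' rho : C :=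
  ((win0 rho' b == x) && (win1 rho b == y))%:R * (overlap s t rho rho')^*.
Definition maskedA s t b x y rho' k : C :=
  \sum_rho mask s t b x y rho' rho * projA s t b x y rho k.

Lemma dotv_vwin_mask s t : dotv (vwin s) (vwin t) =
  \sum_b \sum_x \sum_y \sum_rho' \sum_k (maskedA s t b x y rho' k)^* * projB s t b x y rho' k.
Proof.
pose F b x y rho' rho := (win0 rho' b == x)%:R * ((win1 rho b == y)%:R *
  (overlap s t rho rho' * dotv (projA s t b x y rho) (mulMv (Pguess s t b x y) (winv t rho' b)))).
transitivity (\sum_b \sum_x \sum_y \sum_rho' \sum_rho F b x y rho' rho); last first.
  apply: eq_bigr => b _; apply: eq_bigr => x _; apply: eq_bigr => y _; apply: eq_bigr => rho' _.
  rewrite /F /maskedA /dotv; under [RHS]eq_bigr do rewrite rmorph_sum mulr_suml.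
  rewrite [RHS]exchange_big /=; apply: eq_bigr => rho _.
  rewrite !mulr_sumr; apply: eq_bigr => k _.
  rewrite /mask /projB !rmorphM /= rmorph_nat conjCK.
  by case: (win0 rho' b == x); case: (win1 rho b == y); rewrite /= ?mul0r ?mulr0 ?mul1r; ring.
transitivity (\sum_b \sum_rho' \sum_rho \sum_x \sum_y F b x y rho' rho); last first.
  apply: eq_bigr => b _; rewrite exchange_big3; apply: eq_bigr => x _.
  by rewrite exchange_big3.
rewrite dotv_vwin exchange_big3; apply: eq_bigr => b _; rewrite exchange_big /=.
apply: eq_bigr => rho' _; apply: eq_bigr => rho _; rewrite /F.
under eq_bigr do rewrite -mulr_sumr.
by rewrite sum_delta sum_delta dotv_winv_Pguess.
Qed.

Lemma overlap_prod s t rho rho' :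
  overlap s t rho rho' = \prod_j overlap1 C (s j) (t j) (rho j) (rho' j).
Proof.
rewrite /overlap /overlap1 bigA_distr_bigA /=; apply: eq_bigr => a _.
by rewrite /Psi rmorph_prod -big_split; apply: eq_bigr => j _; rewrite !ffunE.
Qed.

Lemma win0E rho b j : win0 rho b j = (if b then (rho j).2 else (rho j).1) (+) q.1 j.
Proof. by rewrite /win0 /bxor /rsel !ffunE; case: b; rewrite !ffunE. Qed.

Lemma win1E rho b j : win1 rho b j = (if b then (rho j).1 else (rho j).2) (+) q.2 j.
Proof. by rewrite /win1 /bxor /rsel !ffunE; case: b; rewrite /= !ffunE. Qed.

Lemma mask_prod s t b x y rho' rho :
  mask s t b x y rho' rho =
  \prod_j mask1 C b (x j) (y j) (q.1 j) (q.2 j) (s j) (t j) (rho' j) (rho j).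
Proof.
rewrite /mask /mask1 !big_split /= overlap_prod rmorph_prod /=; congr (_ * _).
rewrite -mulnb natrM !natr_eq_ffun; congr (_ * _); apply: eq_bigr => j _.
  by rewrite win0E.
by rewrite win1E.
Qed.

Lemma gram_mask s t b x y rho rho'' :
  \sum_rho' (mask s t b x y rho' rho)^* * mask s t b x y rho' rho'' =
  \prod_j gram1 C b (x j) (y j) (q.1 j) (q.2 j) (s j) (t j) (rho j) (rho'' j).
Proof.
rewrite /gram1 bigA_distr_bigA /=; apply: eq_bigr => a _.
by rewrite !mask_prod rmorph_prod -big_split.
Qed.

Lemma gram_mask_offdiag s t b x y rho rho'' : rho != rho'' ->
  \sum_rho' (mask s t b x y rho' rho)^* * mask s t b x y rho' rho'' = 0.
Proof.
move=> rho_neq; rewrite gram_mask.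
have /forallPn [j rho_neq_j] : ~~ [forall j, rho j == rho'' j].
  by apply: contra rho_neq => /forallP eq_rho; apply/eqP/ffunP => j; apply/eqP.
by rewrite (bigD1 j) //= gram1_offdiag // mul0r.
Qed.

Lemma gram_mask_diag_le s t b x y rho :
  \sum_rho' (mask s t b x y rho' rho)^* * mask s t b x y rho' rho <=
  2^-1 ^+ hw (bxor s t) * (win1 rho b == y)%:R.
Proof.
have -> : 2^-1 ^+ hw (bxor s t) = \prod_j (if s j != t j then (2 : C)^-1 else 1).
  rewrite -big_mkcond /= /hw -prodr_const; apply: eq_bigl => j.
  by rewrite inE /bxor ffunE; case: (s j); case: (t j).
rewrite gram_mask natr_eq_ffun -big_split /=.
by apply: ler_prod => j _; rewrite gram1_ge0 win1E gram1_diag_le.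
Qed.

Lemma sum_Pguess_y s t b x (w : K -> C) :
  \sum_y dotv (mulMv (Pguess s t b x y) w) (mulMv (Pguess s t b x y) w) =
  dotv w (mulMv (tens3 (Pi0 x t b) idM idM) w).
Proof.
under eq_bigr do rewrite -(projector_dotv _ _ (projector_Pguess s t b x _)).
rewrite -dotv_sumr; apply: eq_dotv => // k; rewrite -mulMv_sumM.
apply: eq_mulMv => // a c; rewrite -tens3_sum1 /tens3.
by rewrite (proj_meas_sum (Pi1_meas s b)).
Qed.

Lemma sum_Pguess_x s t b y (w : K -> C) :
  \sum_x dotv (mulMv (Pguess s t b x y) w) (mulMv (Pguess s t b x y) w) =
  dotv w (mulMv (tens3 idM (Pi1 y s b) idM) w).
Proof.
under eq_bigr do rewrite -(projector_dotv _ _ (projector_Pguess s t b _ y)).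
rewrite -dotv_sumr; apply: eq_dotv => // k; rewrite -mulMv_sumM.
apply: eq_mulMv => // a c; rewrite -tens3_sum0 /tens3.
by rewrite (proj_meas_sum (Pi0_meas t b)).
Qed.

Lemma norm_projB s t :
  \sum_b \sum_x \sum_y \sum_rho' \sum_k (projB s t b x y rho' k)^* * projB s t b x y rho' k
  = Nwin t.
Proof.
rewrite /Nwin [RHS]exchange_big /=; apply: eq_bigr => b _.
rewrite exchange_big3; apply: eq_bigr => rho' _.
transitivity (\sum_x (win0 rho' b == x)%:R * \sum_y
   dotv (mulMv (Pguess s t b x y) (winv t rho' b)) (mulMv (Pguess s t b x y) (winv t rho' b))).
  apply: eq_bigr => x _; rewrite mulr_sumr; apply: eq_bigr => y _.
  rewrite /dotv mulr_sumr; apply: eq_bigr => k _.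
  by rewrite /projB rmorphM /= rmorph_nat; case: (_ == x); rewrite ?mul0r ?mul1r.
under eq_bigr do rewrite sum_Pguess_y.
by rewrite sum_delta; apply: eq_dotv => // k; rewrite winv_fix0.
Qed.

Lemma norm_projA s t :
  \sum_b \sum_x \sum_y \sum_rho ((win1 rho b == y)%:R *
     dotv (projA s t b x y rho) (projA s t b x y rho)) = Nwin s.
Proof.
rewrite /Nwin [RHS]exchange_big /=; apply: eq_bigr => b _.
rewrite exchange_big3; apply: eq_bigr => rho _; rewrite exchange_big /=.
under eq_bigr do rewrite -mulr_sumr sum_Pguess_x.
by rewrite sum_delta; apply: eq_dotv => // k; rewrite winv_fix1.
Qed.

Lemma norm_maskedA_le s t :
  \sum_b \sum_x \sum_y \sum_rho' \sum_k (maskedA s t b x y rho' k)^* * maskedA s t b x y rho' k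
  <= 2^-1 ^+ hw (bxor s t) * Nwin s.
Proof.
rewrite -(norm_projA s t) !mulr_sumr; apply: ler_sum => b _.
rewrite mulr_sumr; apply: ler_sum => x _; rewrite mulr_sumr; apply: ler_sum => y _.
rewrite exchange_big /= (eq_bigr (fun k => \sum_rho
    (\sum_rho' (mask s t b x y rho' rho)^* * mask s t b x y rho' rho) *
    ((projA s t b x y rho k)^* * projA s t b x y rho k))); last first.
  move=> k _; apply: (sum_gram_diag (fun rho => projA s t b x y rho k)).
  exact: gram_mask_offdiag.
rewrite exchange_big /= mulr_sumr; apply: ler_sum => rho _.
rewrite /dotv !mulr_sumr; apply: ler_sum => k _.
rewrite [X in _ <= X]mulrA; apply: ler_wpM2r; first exact: conjC_mul_ge0.
exact: gram_mask_diag_le.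
Qed.

Lemma dotv_vwin_le s t :
  `|dotv (vwin s) (vwin t)| ^+ 2 <= 2^-1 ^+ hw (bxor s t) * Nwin s * Nwin t.
Proof.
pose idx := (bool * bits n * bits n * Abasis n * K)%type.
have CS := dotv_CauchySchwarz (fun p : idx => maskedA s t p.1.1.1.1 p.1.1.1.2 p.1.1.2 p.1.2 p.2)
                               (fun p : idx => projB s t p.1.1.1.1 p.1.1.1.2 p.1.1.2 p.1.2 p.2).
rewrite /dotv !big_pair /= -/(dotv _ _) -dotv_vwin_mask norm_projB in CS.
apply: le_trans CS _; apply: ler_wpM2r; first exact: Nwin_ge0.
exact: norm_maskedA_le.
Qed.

Lemma dotv_sum_vwin_le :
  dotv (fun ak => \sum_s vwin s ak) (fun ak => \sum_s vwin s ak)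
    <= (\sum_s Nwin s) * (1 + invsqrt2) ^+ n.
Proof.
have weighted : \sum_s \sum_t invsqrt2 ^+ hw (bxor s t) * Nwin s
                = (\sum_s Nwin s) * (1 + invsqrt2) ^+ n.
  by rewrite big_distrl /=; apply: eq_bigr => s _; rewrite -mulr_suml sum_expr_hw_bxor mulrC.
apply: le_trans (real_ler_norm (ger0_real (dotv_ge0 _))) _.
rewrite dotv_suml; under eq_bigr do rewrite dotv_sumr.
apply: le_trans (ler_norm_sum _ _ _) _.
apply: (@le_trans _ _ (\sum_s \sum_t invsqrt2 ^+ hw (bxor s t) * (Nwin s + Nwin t) / 2)).
  apply: ler_sum => s _; apply: le_trans (ler_norm_sum _ _ _) _.
  apply: ler_sum => t _; apply: norm_le_AMGM; rewrite ?Nwin_ge0 ?exprn_ge0 ?invsqrt2_ge0 //.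
  by rewrite -exprM mulnC exprM (expr2 invsqrt2) invsqrt2_sqr dotv_vwin_le.
have -> : \sum_s \sum_t invsqrt2 ^+ hw (bxor s t) * (Nwin s + Nwin t) / 2 =
    2^-1 * (\sum_s \sum_t invsqrt2 ^+ hw (bxor s t) * Nwin s) +
    2^-1 * (\sum_t \sum_s invsqrt2 ^+ hw (bxor t s) * Nwin t).
  rewrite [in X in _ + X]exchange_big /= !mulr_sumr -big_split; apply: eq_bigr => s _.
  rewrite !mulr_sumr -big_split; apply: eq_bigr => t _.
  by rewrite bxorC /=; ring.
by rewrite weighted -mulrDl [2^-1 + _](_ : _ = 1) ?mul1r //; field.
Qed.

Lemma sum_Nwin_le : \sum_s Nwin s <= (4 ^ n)%:R * (1 + invsqrt2) ^+ n.
Proof.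
set S := \sum_s Nwin s; set V := fun ak => \sum_s vwin s ak.
have S_ge0 : 0 <= S by apply: sumr_ge0 => s _; apply: Nwin_ge0.
have CS := dotv_CauchySchwarz Phi_pur V.
have dotv_Phi_pur_V : dotv Phi_pur V = S.
  by rewrite dotv_sumr; apply: eq_bigr => s _; apply: dotv_Phi_pur_vwin.
rewrite dotv_Phi_pur_V dotv_Phi_pur ger0_norm // expr2 in CS.
have : S * S <= S * ((4 ^ n)%:R * (1 + invsqrt2) ^+ n).
  apply: le_trans CS _; rewrite mulrCA; apply: ler_wpM2l; first by rewrite ler0n.
  exact: dotv_sum_vwin_le.
have [->|S_neq0] := eqVneq S 0.
  by move=> _; rewrite mulr_ge0 ?ler0n // exprn_ge0 // addr_ge0 ?invsqrt2_ge0.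
by rewrite ler_pM2l // lt_def S_neq0 S_ge0.
Qed.

End Strategy.

Unset Implicit Arguments.
Theorem mainTheorem3 (C : numClosedFieldType) (n : nat) (gamma : C)
  (E B0 B1 B' : finType)
  (U : (B0 * B1 * B') -> (Abasis n * E) -> C) (chi : E -> C)
  (R : bool -> B' -> B' -> C)
  (Pi0 : bits n -> bits n -> bool -> B0 -> B0 -> C)
  (Pi1 : bits n -> bits n -> bool -> B1 -> B1 -> C) :
  (1 <= n)%N -> 0 <= gamma <= 1 ->
  pure_state chi -> unitary U -> proj_meas R ->
  (forall (s : bits n) (b' : bool), proj_meas (fun e => Pi0 e s b')) ->
  (forall (s : bits n) (b' : bool), proj_meas (fun e => Pi1 e s b')) ->
  p_win gamma U chi R Pi0 Pi1
    <= #|Qset n gamma|%:R * (2^-1 + (2 * sqrtC 2)^-1) ^+ n.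
Proof.
(* The bound holds for each pair [q] of error patterns separately, whatever [n] and [gamma]. *)
move=> _ _ chi_pure U_unitary R_meas Pi0_meas Pi1_meas.
have win_q_le q : \sum_r0 \sum_r1 \sum_s \sum_b
    expect3 (Phi U chi s r0 r1) (Pi0 (bxor (if b then r1 else r0) q.1) s b)
      (Pi1 (bxor (if b then r0 else r1) q.2) s b) (R b)
    <= (4 ^ n)%:R * (1 + invsqrt2 C) ^+ n.
  by rewrite (sum_expect3_Nwin U chi R_meas Pi0_meas Pi1_meas); exact: sum_Nwin_le.
rewrite /p_win; apply: le_trans (ler_wpM2l _ (ler_sum _ (fun q _ => win_q_le q))) _.
  by rewrite invr_ge0 exprn_ge0 ?ler0n.
have -> : (2^-1 + (2 * sqrtC 2)^-1 : C) = (1 + invsqrt2 C) / 2.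
  by rewrite /invsqrt2 invfM; field; rewrite sqrtC_eq0 pnatr_eq0.
rewrite sumr_const exprMn exprVn natrX mulnC exprM.
have -> : (4 : C) = 2 * 2 by rewrite -natrM.
rewrite exprMn -mulr_natl le_eqVlt; apply/orP; left; apply/eqP.
by field; rewrite mulr1 expf_eq0 pnatr_eq0 andbF.
Qed.
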